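(* Let $q \in \mathbb{N}$ and let $f\colon [0,1]\times[0,1]\to\mathbb{R}_+$ be a positive definite function on $[0,1]$. Let $0 = t_1 < t_2 < \dots < t_\ell = 1$ be anchor points and let $A_1,\dots,A_\ell \in \mathbb{R}^{q\times q}$ be symmetric positive definite matrices. For each $t\in[0,1]$ define $B_t\in\mathbb{R}^{q\times q}$ as the unique positive definite matrix satisfying $$B_t^\top B_t = \frac{t_{k+1}-t}{t_{k+1}-t_k}A_k + \frac{t-t_k}{t_{k+1}-t_k}A_{k+1} \quad \text{for } t\in[t_k,t_{k+1}].$$ For all $s,t\in[0,1]$ define $K(s,t) = f(s,t)\, B_s^\top B_t \in \mathbb{R}^{q\times q}$. Then the matrix-valued function $K\colon[0,1]\times[0,1]\to\mathbb{R}^{q\times q}$ is positive definite.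
   Context: A function $f\colon[0,1]\times[0,1]\to\mathbb{R}$ is positive definite if for every finite collection $s_1,\dots,s_m\in[0,1]$ the matrix $(f(s_i,s_j))_{i,j=1}^m$ is positive definite. A matrix-valued function $K\colon[0,1]\times[0,1]\to\mathbb{R}^{q\times q}$ is positive definite if for every finite collection $s_1,\dots,s_m\in[0,1]$ the block matrix $(K(s_i,s_j))_{i,j=1}^m\in\mathbb{R}^{qm\times qm}$ is positive definite. *)

From HB Require Import structures.
From mathcomp Require Import all_boot all_order all_algebra.
From mathcomp Require Import reals.
Set Implicit Arguments. Unset Strict Implicit. Unset Printing Implicit Defensive.
Import Order.TTheory GRing.Theory Num.Theory.
Local Open Scope ring_scope.

Definition posdef_mx (R : numDomainType) (n : nat) (M : 'M[R]_n) : Prop :=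
  M^T = M /\ forall x : 'cV[R]_n, x != 0 -> 0 < (x^T *m M *m x) 0 0.

Definition posdef_fun (R : realType) (f : R -> R -> R) : Prop :=
  forall (m : nat) (s : 'I_m -> R),
    (forall i, 0 <= s i <= 1) -> injective s ->
    posdef_mx (\matrix_(i < m, j < m) f (s i) (s j)).

Definition posdef_mxfun (R : realType) (q : nat) (K : R -> R -> 'M[R]_q) : Prop :=
  forall (m : nat) (s : 'I_m -> R),
    (forall i, 0 <= s i <= 1) -> injective s ->
    posdef_mx (\mxblock_(i < m, j < m) K (s i) (s j)).

From HB Require Import structures.
From mathcomp Require Import all_boot all_order all_algebra.
From mathcomp Require Import reals.
Set Implicit Arguments. Unset Strict Implicit. Unset Printing Implicit Defensive.
Import Order.TTheory GRing.Theory Num.Theory.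
Local Open Scope ring_scope.

(* For a positive definite F and injective matrices C_i, the block matrix
   K = (F_ij C_i^T C_j)_ij is positive definite.  Write x = (x_1, ..., x_m)
   blockwise and y_i := C_i x_i.  Then
   x^T K x = sum_(i,j) F_ij <y_i, y_j> = sum_k z_k^T F z_k, where z_k collects
   the k-th coordinates of y_1, ..., y_m, as in the Schur product theorem.
   Every z_k^T F z_k is nonnegative, and one of them is positive: if x_i != 0
   then y_i != 0, so some z_k != 0.  The theorem is the case F = (f(s_i,s_j)),
   C_i = B_(s_i): only the invertibility of the B_s matters, not the
   interpolation formula defining them nor the sign of f. *)

Lemma qformE (R : comPzRingType) n (u v : 'cV[R]_n) (M : 'M_n) :
  (u^T *m M *m v) 0 0 = \sum_i \sum_j u i 0 * M i j * v j 0.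
Proof.
rewrite !mxE; under eq_bigr => j _ do rewrite !mxE big_distrl /=.
rewrite exchange_big /=; apply: eq_bigr => i _; apply: eq_bigr => j _.
by rewrite !mxE.
Qed.

Lemma posdef_mx_mul_neq0 (R : numDomainType) n (M : 'M[R]_n) (v : 'cV_n) :
  posdef_mx M -> v != 0 -> M *m v != 0.
Proof.
move=> [_ Mpos] v0; apply/eqP => Mv0.
by move: (Mpos v v0); rewrite -mulmxA Mv0 mulmx0 mxE ltxx.
Qed.

Section GramBlock.

Variables (R : numDomainType) (m p q : nat).
Variables (F : 'M[R]_m) (C : 'I_m -> 'M[R]_(p, q)).

Definition gram_block : 'M[R]_(\sum_(i < m) q) :=
  \mxblock_(i < m, j < m) (F i j *: ((C i)^T *m C j)).

Definition gram_coord (x : 'cV[R]_(\sum_(i < m) q)) (k : 'I_p) : 'cV[R]_m :=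
  \col_i ((C i *m submxcol x i) k 0).

Lemma tr_gram_block : F^T = F -> gram_block^T = gram_block.
Proof.
move=> /matrixP FT; rewrite tr_mxblock; apply: eq_mxblock => i j.
by rewrite linearZ /= trmx_mul trmxK -[F i j](FT) mxE.
Qed.

Lemma gram_block_qform (x : 'cV[R]_(\sum_(i < m) q)) :
  (x^T *m gram_block *m x) 0 0
    = \sum_k ((gram_coord x k)^T *m F *m gram_coord x k) 0 0.
Proof.
pose y i := C i *m submxcol x i.
have entry i j : ((submxcol x i)^T *m (F i j *: ((C i)^T *m C j))
                   *m submxcol x j) 0 0 = \sum_k F i j * (y i k 0 * y j k 0).
  rewrite -scalemxAr -scalemxAl mxE -!mulmxA mulmxA -trmx_mul mxE big_distrr.
  by apply: eq_bigr => k _; rewrite mxE.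
have Ex : x = \mxcol_i submxcol x i by rewrite submxcolK.
rewrite [in LHS]Ex tr_mxcol mul_mxrow_mxblock mul_mxrow_mxcol summxE.
under eq_bigr => j _ do rewrite mulmx_suml summxE.
under eq_bigr => j _ do under eq_bigr => i _ do rewrite entry.
under [RHS]eq_bigr => k _ do rewrite qformE.
rewrite exchange_big [RHS]exchange_big /=; apply: eq_bigr => i _.
rewrite [RHS]exchange_big /=; apply: eq_bigr => j _.
by apply: eq_bigr => k _; rewrite !mxE mulrCA mulrA.
Qed.

Lemma posdef_gram_block :
  posdef_mx F -> (forall i (v : 'cV_q), v != 0 -> C i *m v != 0) ->
  posdef_mx gram_block.
Proof.
move=> [FT Fpos] Cinj; split; first exact: tr_gram_block.
move=> x x0; rewrite gram_block_qform.
have qform_ge0 k : 0 <= ((gram_coord x k)^T *m F *m gram_coord x k) 0 0.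
  have [->|zk0] := eqVneq (gram_coord x k) 0; first by rewrite mulmx0 mxE.
  exact/ltW/Fpos.
have [i xi0] : exists i, submxcol x i != 0.
  apply/existsP; apply: contraNT x0 => /existsPn xs0.
  rewrite -(submxcolK x) -(mxcol0 (p_ := fun=> q)); apply/eqP/eq_mxcol => i.
  exact/eqP/negPn.
have [k yik0] : exists k, (C i *m submxcol x i) k 0 != 0.
  apply/existsP; apply: contraNT (Cinj i _ xi0) => /existsPn y0.
  by apply/eqP/matrixP => k j; rewrite (ord1 j) [RHS]mxE; exact/eqP/negPn.
have zk0 : gram_coord x k != 0.
  by apply: contra_neq yik0 => /matrixP/(_ i 0); rewrite !mxE.
rewrite (bigD1 k) //=; apply: ltr_wpDr; last exact: Fpos.
by apply: sumr_ge0 => k' _; exact: qform_ge0.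
Qed.

End GramBlock.

Theorem proposition1 (R : realType) (q : nat) (f : R -> R -> R)
  (l : nat) (t : nat -> R) (A : nat -> 'M[R]_q) (B : R -> 'M[R]_q) :
  (forall s u, 0 <= s <= 1 -> 0 <= u <= 1 -> 0 <= f s u) ->
  posdef_fun f ->
  (1 < l)%N ->
  t 0%N = 0 -> t l.-1 = 1 ->
  (forall k, (k.+1 < l)%N -> t k < t k.+1) ->
  (forall k, (k < l)%N -> posdef_mx (A k)) ->
  (forall s, 0 <= s <= 1 -> posdef_mx (B s)) ->
  (forall k s, (k.+1 < l)%N -> t k <= s <= t k.+1 ->
     (B s)^T *m B s =
       ((t k.+1 - s) / (t k.+1 - t k)) *: A k
       + ((s - t k) / (t k.+1 - t k)) *: A k.+1) ->
  posdef_mxfun (fun s u => f s u *: ((B s)^T *m B u)).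
Proof.
move=> _ fpd _ _ _ _ _ Bpd _ m s s01 sinj.
have -> : \mxblock_(i < m, j < m) (f (s i) (s j) *: ((B (s i))^T *m B (s j)))
    = gram_block (\matrix_(i < m, j < m) f (s i) (s j)) (fun i => B (s i)).
  by apply: eq_mxblock => i j; rewrite mxE.
apply: posdef_gram_block; first exact: fpd.
by move=> i v; apply: posdef_mx_mul_neq0; exact: Bpd.
Qed.
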